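(* Let $G$ be a group, let $K$ be an uncountable algebraically closed field, and let $A$ be an affine algebraic set over $K$. Then every algebraic cellular automaton $\tau\colon A^G\to A^G$ has the closed image property: its image $\tau(A^G)$ is a closed subset of $A^G$ with respect to the prodiscrete topology.
   Context: For a group $G$ and a set $A$, $A^G$ is the set of maps $x\colon G\to A$ (configurations), with the $G$-shift $(gx)(h)=x(g^{-1}h)$. The prodiscrete topology on $A^G$ is the product topology where each factor $A$ carries the discrete topology. For $x\in A^G$ and $\Omega\subset G$, $x|_\Omega$ denotes the restriction. A cellular automaton is a map $\tau\colon A^G\to A^G$ for which there exist a finite subset $M\subset G$ (a memory set) and a map $\mu\colon A^M\to A$ (the local defining map) with $\tau(x)(g)=\mu((g^{-1}x)|_M)$ for all $x\in A^G$, $g\in G$. An affine algebraic set over a field $K$ is the common zero set in $K^m$ of a set of polynomials in $K[t_1,\dots,t_m]$; a map between affine algebraic sets $V\subset K^m$, $W\subset K^n$ is regular if it is the restriction of a polynomial map $K^m\to K^n$. For finite $M$, $A^M$ is an affine algebraic set (a finite Cartesian power of $A$). A cellular automaton $\tau\colon A^G\to A^G$ with $A$ an affine algebraic set over $K$ is algebraic if for some (equivalently any) memory set $M$ the local defining map $\mu\colon A^M\to A$ is regular. *)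

From Stdlib Require List.
From HB Require Import structures.
From mathcomp Require Import all_boot all_order all_algebra.
Set Implicit Arguments. Unset Strict Implicit. Unset Printing Implicit Defensive.
Import GRing.Theory.
Local Open Scope ring_scope.

Record group := Group {
  gcar :> Type;
  gmul : gcar -> gcar -> gcar;
  ginv : gcar -> gcar;
  gone : gcar;
  gmulA : forall a b c, gmul a (gmul b c) = gmul (gmul a b) c;
  gmul1 : forall a, gmul gone a = a;
  gmulV : forall a, gmul (ginv a) a = gone
}.

Inductive pexpr (R : Type) (I : Type) : Type :=
| PC of R
| PX of I
| PAdd of pexpr R I & pexpr R I
| PMul of pexpr R I & pexpr R I.

Fixpoint peval (R : pzRingType) (I : Type) (e : pexpr R I) (v : I -> R) : R :=
  match e with
  | PC c => c
  | PX i => v i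
  | PAdd e1 e2 => peval e1 v + peval e2 v
  | PMul e1 e2 => peval e1 v * peval e2 v
  end.

Definition poly_fun (R : pzRingType) (I : Type) (f : (I -> R) -> R) : Prop :=
  exists e : pexpr R I, forall v, f v = peval e v.

Definition poly_map (R : pzRingType) (I J : Type) (f : (I -> R) -> (J -> R)) : Prop :=
  forall j, poly_fun (fun v => f v j).

Definition affine_algebraic_set (K : fieldType) (m : nat) (A : ('I_m -> K) -> Prop) : Prop :=
  exists S : pexpr K 'I_m -> Prop,
    forall v, A v <-> (forall e, S e -> peval e v = 0).

Definition uncountable (T : Type) : Prop := ~ exists f : nat -> T, forall t : T, exists k, f k = t.

Definition config (K : Type) (m : nat) (A : ('I_m -> K) -> Prop) (G : group)
  (x : G -> 'I_m -> K) : Prop := forall g, A (x g).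

(* tau : A^G -> A^G (given as a map on G -> K^m, only its values on A^G matter)
   is an algebraic cellular automaton: it maps A^G into A^G and there are a finite
   memory set {s i | i < n} ⊆ G and a regular local map mu : A^M -> A (restriction
   of a polynomial map K^(M x m) -> K^m) with tau(x)(g) = mu((g^{-1} x)|_M),
   where (g^{-1} x)(h) = x(g h). *)
Definition algebraic_CA (K : fieldType) (m : nat) (A : ('I_m -> K) -> Prop) (G : group)
  (tau : (G -> 'I_m -> K) -> (G -> 'I_m -> K)) : Prop :=
  (forall x, config A x -> config A (tau x)) /\
  exists (n : nat) (s : 'I_n -> G) (mu : ('I_n * 'I_m -> K) -> ('I_m -> K)),
    poly_map mu /\
    forall x, config A x -> forall g,
      tau x g = mu (fun p => x (gmul g (s p.1)) p.2).

(* Closedness of a set X ⊆ A^G in the prodiscrete topology: every configuration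
   y in A^G all of whose finite restrictions agree with some element of X lies in X
   (basic open neighbourhoods of y are the cylinders {z | z|_F = y|_F}, F finite). *)
Definition prodiscrete_closed (K : Type) (m : nat) (A : ('I_m -> K) -> Prop) (G : group)
  (X : (G -> 'I_m -> K) -> Prop) : Prop :=
  forall y, config A y ->
    (forall F : list G, exists z, X z /\ forall h, List.In h F -> z h = y h) ->
    X y.

Definition image_of (K : Type) (m : nat) (A : ('I_m -> K) -> Prop) (G : group)
  (tau : (G -> 'I_m -> K) -> (G -> 'I_m -> K)) : (G -> 'I_m -> K) -> Prop :=
  fun y => exists x, config A x /\ tau x = y.

(* Since [tau x h] only depends on [x] along [h <s>], with [s] the memory set, it suffices to
   solve, on each left coset of the subgroup [<s>], the system of polynomial equations
   "[x h] lies in [A] and [tau x h = y h]" in the countably many unknowns [x h i]. Every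
   finite subsystem is solvable because [y] lies in the closure of the image, so the
   generated ideal is proper. Over an uncountable algebraically closed field, a proper
   ideal in countably many variables has a zero: fix the variables one by one keeping the
   ideal proper. This is possible because if every [x_u - a] (a in K) were invertible
   modulo the ideal, uncountably many of the inverses would have bounded degree and
   variables, hence be linearly dependent; this gives a nonzero univariate polynomial in
   [x_u] in the ideal, which splits into factors [x_u - r] that are all invertible. *)

From Stdlib Require Import Classical ClassicalEpsilon FunctionalExtensionality PropExtensionality.
From HB Require Import structures.
From mathcomp Require Import all_boot all_order all_algebra ring.
Set Implicit Arguments. Unset Strict Implicit. Unset Printing Implicit Defensive.
Import GRing.Theory.
Local Open Scope ring_scope.

Fixpoint pexpr_vars_in (R I : Type) (P : I -> Prop) (e : pexpr R I) : Prop :=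
  match e with
  | PC _ => True
  | PX i => P i
  | PAdd a b | PMul a b => pexpr_vars_in P a /\ pexpr_vars_in P b
  end.

Fixpoint pexpr_deg (R I : Type) (e : pexpr R I) : nat :=
  match e with
  | PC _ => 0
  | PX _ => 1
  | PAdd a b => maxn (pexpr_deg a) (pexpr_deg b)
  | PMul a b => pexpr_deg a + pexpr_deg b
  end.

Lemma pexpr_vars_in_mono (R I : Type) (P Q : I -> Prop) (e : pexpr R I) :
  (forall i, P i -> Q i) -> pexpr_vars_in P e -> pexpr_vars_in Q e.
Proof.
move=> PQ; elim: e => [c|i|a IHa b IHb|a IHa b IHb] //=; first exact: PQ;
by move=> [/IHa ? /IHb ?].
Qed.

Lemma pexpr_vars_bounded (R I : Type) (P : I -> Prop) (h : I -> nat) (e : pexpr R I) :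
  pexpr_vars_in P e -> exists N, pexpr_vars_in (fun i => P i /\ (h i < N)%N) e.
Proof.
elim: e => /= [c _|i Pi|a IHa b IHb|a IHa b IHb]; [by exists 0%N | by exists (h i).+1 | |];
move=> [/IHa [Na Ha] /IHb [Nb Hb]]; exists (maxn Na Nb);
by split; [apply: pexpr_vars_in_mono Ha | apply: pexpr_vars_in_mono Hb] => i [Pi hi];
  rewrite leq_max hi ?orbT.
Qed.

Definition polyfun_on (K : fieldType) (V : Type) (P : V -> Prop) (f : (V -> K) -> K) :=
  exists e : pexpr K V, pexpr_vars_in P e /\ forall v, f v = peval e v.

Section PolynomialIdeals.

Variables (K : fieldType) (V : Type) (P : V -> Prop).
Local Notation fn := ((V -> K) -> K).
Implicit Types (f g h : fn) (E : fn -> Prop).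

Lemma polyfun_on_ext f g : (forall v, f v = g v) -> polyfun_on P f -> polyfun_on P g.
Proof. by move=> fg [e [Pe fe]]; exists e; split=> // v; rewrite -fg. Qed.

Lemma polyfun_on_cst (c : K) : polyfun_on P (fun _ => c).
Proof. by exists (PC _ c). Qed.

Lemma polyfun_on_var u : P u -> polyfun_on P (fun v : V -> K => v u).
Proof. by move=> Pu; exists (PX _ u). Qed.

Lemma polyfun_onD f g : polyfun_on P f -> polyfun_on P g -> polyfun_on P (fun v => f v + g v).
Proof. by move=> [a [Pa fa]] [b [Pb gb]]; exists (PAdd a b); split=> // v /=; rewrite fa gb. Qed.

Lemma polyfun_onM f g : polyfun_on P f -> polyfun_on P g -> polyfun_on P (fun v => f v * g v).
Proof. by move=> [a [Pa fa]] [b [Pb gb]]; exists (PMul a b); split=> // v /=; rewrite fa gb. Qed.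

Lemma polyfun_onB f g : polyfun_on P f -> polyfun_on P g -> polyfun_on P (fun v => f v - g v).
Proof.
move=> Pf Pg; apply: (@polyfun_on_ext (fun v => f v + (-1) * g v)) => [v|].
  by rewrite mulN1r.
by apply: polyfun_onD => //; apply: polyfun_onM => //; apply: polyfun_on_cst.
Qed.

Lemma polyfun_on_prod (I : Type) (r : seq I) (Q : pred I) (F : I -> fn) :
  (forall i, polyfun_on P (F i)) -> polyfun_on P (fun v => \prod_(i <- r | Q i) F i v).
Proof.
move=> PF; elim: r => [|i r IH].
  by apply: (polyfun_on_ext (fun v => esym (big_nil _ _ _ _))); apply: polyfun_on_cst.
apply: (polyfun_on_ext (fun v => esym (big_cons _ _ _ _ _ _))).
by case: (Q i) => //; apply: polyfun_onM.
Qed.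

Lemma polyfun_on_peval (I : Type) (e : pexpr K I) (g : I -> V) :
  (forall i, P (g i)) -> polyfun_on P (fun v => peval e (fun i => v (g i))).
Proof.
move=> Pg; elim: e => /= [c|i|a IHa b IHb|a IHa b IHb].
- exact: polyfun_on_cst.
- exact: polyfun_on_var.
- exact: polyfun_onD.
- exact: polyfun_onM.
Qed.

Definition in_ideal E f :=
  exists l : seq (fn * fn),
    (forall q, List.In q l -> polyfun_on P q.1 /\ E q.2) /\
    forall v, f v = \sum_(q <- l) q.1 v * q.2 v.

Definition proper_ideal E := ~ in_ideal E (fun _ => 1).

Definition adjoin E f0 : fn -> Prop := fun f => E f \/ f = f0.

Lemma in_ideal_ext E f g : (forall v, f v = g v) -> in_ideal E f -> in_ideal E g.
Proof. by move=> fg [l [Hl fl]]; exists l; split=> // v; rewrite -fg. Qed.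

Lemma in_ideal0 E : in_ideal E (fun _ => 0).
Proof. by exists [::]; split=> // v; rewrite big_nil. Qed.

Lemma in_ideal_gen E f : E f -> in_ideal E f.
Proof.
move=> Ef; exists [:: (fun _ => 1, f)]; split.
  by move=> q [<-|//]; split=> //; apply: polyfun_on_cst.
by move=> v; rewrite big_seq1 mul1r.
Qed.

Lemma in_idealD E f g : in_ideal E f -> in_ideal E g -> in_ideal E (fun v => f v + g v).
Proof.
move=> [l1 [H1 f1]] [l2 [H2 g2]]; exists (l1 ++ l2); split.
  by move=> q /(@List.in_app_or _ l1 l2) [/H1|/H2].
by move=> v; rewrite big_cat /= f1 g2.
Qed.

Lemma in_idealMl E h f : polyfun_on P h -> in_ideal E f -> in_ideal E (fun v => h v * f v).
Proof.
move=> Ph [l [Hl fl]]; exists [seq (fun v => h v * q.1 v, q.2) | q <- l]; split.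
  move=> q /List.in_map_iff [q' [<- /Hl [Pq' Eq']]].
  by split=> //; apply: polyfun_onM.
by move=> v; rewrite fl big_map mulr_sumr; apply: eq_bigr => q _; rewrite mulrA.
Qed.

Lemma in_idealB E f g : in_ideal E f -> in_ideal E g -> in_ideal E (fun v => f v - g v).
Proof.
move=> If Ig; apply: (@in_ideal_ext _ (fun v => f v + (-1) * g v)) => [v|].
  by rewrite mulN1r.
by apply: in_idealD => //; apply: in_idealMl => //; apply: polyfun_on_cst.
Qed.

Lemma in_ideal_sum E (I : Type) (r : seq I) (F : I -> fn) :
  (forall i, in_ideal E (F i)) -> in_ideal E (fun v => \sum_(i <- r) F i v).
Proof.
move=> IF; elim: r => [|i r IH].
  by apply: (in_ideal_ext (fun v => esym (big_nil _ _ _ _))); apply: in_ideal0.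
by apply: (in_ideal_ext (fun v => esym (big_cons _ _ _ _ _ _))); apply: in_idealD.
Qed.

Lemma in_ideal_adjoin E f0 f :
  in_ideal (adjoin E f0) f -> exists2 g, polyfun_on P g & in_ideal E (fun v => f v - g v * f0 v).
Proof.
move=> [l [Hl fl]]; elim: l f Hl fl => [|q l IH] f Hl fl.
  exists (fun _ => 0); first exact: polyfun_on_cst.
  by apply: in_ideal_ext (in_ideal0 _) => v; rewrite fl big_nil mul0r subr0.
have [g Pg Ig] := IH (fun v => \sum_(q <- l) q.1 v * q.2 v)
   (fun q' lq' => Hl q' (or_intror lq')) (fun v => erefl).
have [Pq [Eq|q2E]] := Hl q (or_introl erefl).
  exists g => //; apply: in_ideal_ext (in_idealD (in_idealMl Pq (in_ideal_gen Eq)) Ig).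
  by move=> v; rewrite fl big_cons addrA.
exists (fun v => q.1 v + g v); first exact: polyfun_onD.
apply: in_ideal_ext Ig => v; rewrite fl big_cons q2E mulrDl.
by rewrite [q.1 v * f0 v + _]addrC opprD addrA addrK.
Qed.

Definition finitely_solvable E :=
  forall l : seq fn, (forall f, List.In f l -> E f) -> exists v, forall f, List.In f l -> f v = 0.

Lemma proper_of_finitely_solvable E : finitely_solvable E -> proper_ideal E.
Proof.
move=> solvable [l [Hl one_l]].
have [v zero_v] : exists v, forall f, List.In f (List.map snd l) -> f v = 0.
  by apply: solvable => f /List.in_map_iff [q [<- /Hl []]].
suff sum0 : \sum_(q <- l) q.1 v * q.2 v = 0.
  by have := one_l v; rewrite sum0 => /eqP; rewrite oner_eq0.
elim: l {Hl one_l} zero_v => [|q l IH] zero_v; first by rewrite big_nil.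
rewrite big_cons (zero_v q.2) ?mulr0 ?add0r; last by left.
by apply: IH => f l_f; apply: zero_v; right.
Qed.

Definition invertible_mod E f := exists2 g, polyfun_on P g & in_ideal E (fun v => 1 - g v * f v).

Lemma invertible_mod_prod E (I : Type) (r : seq I) (F : I -> fn) :
  (forall i, polyfun_on P (F i)) -> (forall i, invertible_mod E (F i)) ->
  invertible_mod E (fun v => \prod_(i <- r) F i v).
Proof.
move=> PF invF; elim: r => [|i r [G PG IG]].
  exists (fun _ => 1); first exact: polyfun_on_cst.
  by apply: in_ideal_ext (in_ideal0 _) => v; rewrite big_nil mulr1 subrr.
have [g Pg Ig] := invF i; exists (fun v => g v * G v); first exact: polyfun_onM.
apply: (@in_ideal_ext _
  (fun v => (1 - g v * F i v) + (g v * F i v) * (1 - G v * \prod_(j <- r) F j v))).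
  by move=> v; rewrite big_cons mulrBr mulr1 addrA subrK mulrACA.
by apply: in_idealD => //; apply: in_idealMl => //; apply: polyfun_onM.
Qed.

Lemma in_ideal_one_of_invertible E f :
  invertible_mod E f -> in_ideal E f -> in_ideal E (fun _ => 1).
Proof.
move=> [g Pg Ig] If; apply: (@in_ideal_ext _ (fun v => (1 - g v * f v) + g v * f v)).
  by move=> v; rewrite subrK.
by apply: in_idealD => //; apply: in_idealMl.
Qed.

End PolynomialIdeals.

Lemma nth_List_In (T : Type) (x0 : T) (s : seq T) j : (j < size s)%N -> List.In (nth x0 s j) s.
Proof. by elim: s j => [//|a s IH] [|j] /= lt_j; [left | right; apply: IH]. Qed.

Lemma List_In_nth (T : Type) (x0 : T) (s : seq T) x :
  List.In x s -> exists j : 'I_(size s), nth x0 s j = x.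
Proof.
elim: s => [//|a s IH] /= [->|/IH [j <-]]; first by exists ord0.
by exists (lift ord0 j).
Qed.

Section LinearSpan.

Variables (K : fieldType) (X : Type).
Implicit Types (f g : X -> K) (L : seq (X -> K)).

Definition in_span L f :=
  exists c : 'I_(size L) -> K, forall v, f v = \sum_(j < size L) c j * nth (fun _ => 0) L j v.

Lemma in_span_ext L f g : (forall v, f v = g v) -> in_span L f -> in_span L g.
Proof. by move=> fg [c fc]; exists c => v; rewrite -fg. Qed.

Lemma in_span0 L : in_span L (fun _ => 0).
Proof. by exists (fun _ => 0) => v; rewrite big1 // => j _; rewrite mul0r. Qed.

Lemma in_spanD L f g : in_span L f -> in_span L g -> in_span L (fun v => f v + g v).
Proof.
move=> [c fc] [d gd]; exists (fun j => c j + d j) => v.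
by rewrite fc gd -big_split; apply: eq_bigr => j _; rewrite mulrDl.
Qed.

Lemma in_spanZ L (a : K) f : in_span L f -> in_span L (fun v => a * f v).
Proof.
move=> [c fc]; exists (fun j => a * c j) => v.
by rewrite fc mulr_sumr; apply: eq_bigr => j _; rewrite mulrA.
Qed.

Lemma in_span_mem L f : List.In f L -> in_span L f.
Proof.
move=> /(List_In_nth (fun _ => 0)) [j0 <-].
exists (fun j => (j == j0)%:R) => v.
by rewrite (bigD1 j0) //= eqxx mul1r big1 ?addr0 // => j /negbTE ->; rewrite mul0r.
Qed.

Lemma in_span_sum L (I : Type) (r : seq I) (F : I -> X -> K) :
  (forall i, in_span L (F i)) -> in_span L (fun v => \sum_(i <- r) F i v).
Proof.
move=> LF; elim: r => [|i r IH].
  by apply: in_span_ext (in_span0 _) => v; rewrite big_nil.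
by apply: in_span_ext (in_spanD (LF i) IH) => v; rewrite big_cons.
Qed.

Lemma in_span_sub L L' f :
  (forall g, List.In g L -> List.In g L') -> in_span L f -> in_span L' f.
Proof.
move=> LL' [c fc]; apply: (in_span_ext (fun v => esym (fc v))).
by apply: in_span_sum => j; apply: in_spanZ; apply: in_span_mem; apply/LL'/nth_List_In.
Qed.

Lemma in_span_dependent L (g : 'I_(size L).+1 -> X -> K) :
  (forall i, in_span L (g i)) ->
  exists c : 'I_(size L).+1 -> K, (exists i, c i != 0) /\ forall v, \sum_i c i * g i v = 0.
Proof.
move=> Lg; have [C gC] := choice _ Lg.
pose M : 'M[K]_((size L).+1, size L) := \matrix_(i, j) C i j.
have /rowV0Pn [w /sub_kermxP wM w_neq0] : kermx M != 0.
  by rewrite -mxrank_eq0 mxrank_ker subn_eq0 -ltnNge ltnS rank_leq_col.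
exists (w ord0); split.
  apply: NNPP => w0; case/eqP: w_neq0; apply/rowP => i; rewrite mxE.
  by apply/eqP/negPn/negP => wi; apply: w0; exists i.
move=> v; under eq_bigr => i _ do rewrite gC mulr_sumr.
rewrite exchange_big /= big1 // => j _.
have /(congr1 (fun u : 'rV_ _ => u ord0 j)) := wM; rewrite !mxE => wMj.
transitivity ((\sum_i w ord0 i * M i j) * nth (fun _ => 0) L j v); last first.
  by rewrite wMj mul0r.
by rewrite mulr_suml; apply: eq_bigr => i _; rewrite mxE mulrA.
Qed.

End LinearSpan.

Section Monomials.

Variables (K : fieldType) (V : Type) (enum : nat -> option V).
Local Notation fn := ((V -> K) -> K).

Definition enum_coord (j : nat) (v : V -> K) : K := if enum j is Some u then v u else 0.

Definition enumerated (u : V) := exists k, enum k = Some u.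

Definition var_index (u : V) : nat := epsilon (inhabits 0%N) (fun k => enum k = Some u).

Lemma var_indexP u : enumerated u -> enum (var_index u) = Some u.
Proof. exact: epsilon_spec. Qed.

Definition enumerated_below (N : nat) (u : V) := enumerated u /\ (var_index u < N)%N.

Fixpoint monomials (N d : nat) : seq fn :=
  if d is d'.+1 then
    monomials N d' ++
    List.flat_map (fun j => List.map (fun mo v => enum_coord j v * mo v) (monomials N d'))
      (List.seq 0 N)
  else [:: fun _ => 1].

Lemma monomials_mono N d d' mo :
  (d <= d')%N -> List.In mo (monomials N d) -> List.In mo (monomials N d').
Proof.
move=> /subnK <-; elim: (d' - d)%N => [//|k IH] mo_d.
by rewrite addSn /=; apply: List.in_or_app; left; apply: IH.
Qed.

Lemma monomialsM N d1 d2 mo1 mo2 :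
  List.In mo1 (monomials N d1) -> List.In mo2 (monomials N d2) ->
  List.In (fun v => mo1 v * mo2 v) (monomials N (d1 + d2)).
Proof.
elim: d1 mo1 => [|d1 IH] mo1 /=.
  move=> [<-|//] mo2_d2; rewrite add0n.
  by rewrite (_ : (fun v => 1 * mo2 v) = mo2) //; apply: functional_extensionality => v;
    rewrite mul1r.
move=> mo1_in mo2_d2; apply: List.in_or_app.
case: (List.in_app_or _ _ _ mo1_in) => [mo1_d1|]; first by left; apply: IH.
move=> /List.in_flat_map [j [j_N /List.in_map_iff [mo [<- mo_d1]]]].
right; apply/List.in_flat_map; exists j; split=> //.
apply/List.in_map_iff; exists (fun v => mo v * mo2 v); split; last exact: IH.
by apply: functional_extensionality => v; rewrite mulrA.
Qed.

Lemma in_span_monomials_mono N d d' f :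
  (d <= d')%N -> in_span (monomials N d) f -> in_span (monomials N d') f.
Proof. by move=> le_dd'; apply: in_span_sub => mo; apply: monomials_mono. Qed.

Lemma in_span_monomialsM N d1 d2 f g :
  in_span (monomials N d1) f -> in_span (monomials N d2) g ->
  in_span (monomials N (d1 + d2)) (fun v => f v * g v).
Proof.
move=> [c fc] [c' gc']; set L1 := monomials N d1; set L2 := monomials N d2.
apply: (@in_span_ext _ _ _ (fun v => \sum_(j < size L1) \sum_(k < size L2)
   (c j * c' k) * (nth (fun _ => 0) L1 j v * nth (fun _ => 0) L2 k v))).
  move=> v; rewrite fc gc' mulr_suml; apply: eq_bigr => j _; rewrite mulr_sumr.
  by apply: eq_bigr => k _; rewrite mulrACA.
apply: in_span_sum => j; apply: in_span_sum => k.
by apply: in_spanZ; apply: in_span_mem; apply: monomialsM; apply: nth_List_In.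
Qed.

Lemma in_span_monomials_peval N d (e : pexpr K V) :
  pexpr_vars_in (enumerated_below N) e -> (pexpr_deg e <= d)%N ->
  in_span (monomials N d) (peval e).
Proof.
elim: e d => [c|u|a IHa b IHb|a IHa b IHb] d /=.
- move=> _ _; apply: (in_span_monomials_mono (leq0n d)).
  apply: (@in_span_ext _ _ _ (fun v => c * 1)) => [v|]; first by rewrite mulr1.
  by apply: in_spanZ; apply: in_span_mem; left.
- move=> [/var_indexP enum_k lt_kN] le_1d; apply: (in_span_monomials_mono le_1d).
  apply: (@in_span_ext _ _ _ (fun v => enum_coord (var_index u) v * 1)) => [v|].
    by rewrite mulr1 /enum_coord enum_k.
  apply: in_span_mem; right; apply/List.in_flat_map; exists (var_index u); split; last by left.
  by apply/List.in_seq; split; [apply/leP | apply/ltP].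
- move=> [Pa Pb]; rewrite geq_max => /andP [da db].
  exact: in_spanD (IHa _ Pa da) (IHb _ Pb db).
- move=> [Pa Pb] dab; apply: (in_span_monomials_mono dab).
  exact: in_span_monomialsM (IHa _ Pa (leqnn _)) (IHb _ Pb (leqnn _)).
Qed.

End Monomials.

Lemma finite_or_arbitrarily_large (T : eqType) (Q : T -> Prop) :
  (exists s : seq T, forall a, Q a -> a \in s) \/
  (forall k, exists s : seq T, [/\ uniq s, size s = k & forall a, a \in s -> Q a]).
Proof.
case: (classic (exists s : seq T, forall a, Q a -> a \in s)) => [|no_cover]; first by left.
right; elim=> [|k [s [uniq_s size_s sQ]]]; first by exists [::].
have [a Qa a_s] : exists2 a, Q a & a \notin s.
  apply: NNPP => no_a; apply: no_cover; exists s => a Qa.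
  by apply: NNPP => /negP a_s; apply: no_a; exists a.
exists (a :: s); split; [by rewrite /= a_s uniq_s | by rewrite /= size_s |].
by move=> b; rewrite inE => /predU1P [-> | /sQ].
Qed.

(* [t0] is needed: [uncountable] holds vacuously for an empty type. *)
Lemma uncountable_large_fiber (T : eqType) (t0 : T) (f : T -> nat) :
  uncountable T ->
  exists n, forall k, exists s : seq T, [/\ uniq s, size s = k & forall a, a \in s -> f a = n].
Proof.
move=> unc_T; apply: NNPP => no_large.
have cover n : exists s : seq T, forall a, f a = n -> a \in s.
  case: (finite_or_arbitrarily_large (fun a => f a = n)) => // large.
  by case: no_large; exists n.
have [L LP] := choice _ cover; apply: unc_T.
exists (fun k => if unpickle k is Some (n, i) then nth t0 (L n) i else t0) => t.
by exists (pickle (f t, index t (L (f t)))); rewrite pickleK nth_index //; apply: LP.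
Qed.

Lemma lagrange_combination_neq0 (K : fieldType) (k : nat) (a : 'I_k -> K) (c : 'I_k -> K) i0 :
  injective a -> c i0 != 0 -> \sum_i c i *: \prod_(j | j != i) ('X - (a j)%:P) != 0.
Proof.
move=> a_inj ci0; apply/negP => /eqP /(congr1 (horner^~ (a i0))).
rewrite horner0 horner_sum (bigD1 i0) //= [X in _ + X]big1 => [|i ne_ii0]; last first.
  by rewrite hornerZ horner_prod (bigD1 i0) 1?eq_sym //= hornerXsubC subrr mul0r mulr0.
rewrite addr0 hornerZ horner_prod => /eqP; rewrite mulf_eq0 (negbTE ci0) /=.
apply/negP/prodf_neq0 => j ne_ji0; rewrite hornerXsubC subr_eq0.
by apply: contra ne_ji0 => /eqP /a_inj ->.
Qed.

Section OneCoordinate.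

Variables (V : Type) (P : V -> Prop) (u : V).
Hypothesis Pu : P u.

Lemma polyfun_on_coordB (K : fieldType) (a : K) : polyfun_on P (fun v => v u - a).
Proof. by apply: polyfun_onB; [apply: polyfun_on_var | apply: polyfun_on_cst]. Qed.

(* Modulo [E], [\prod_(j != i) (x_u - a j)] is congruent to [g i * \prod_j (x_u - a j)],
   and the relation [\sum_i c i * g i = 0] kills the weighted sum of the latter. *)
Lemma poly_in_ideal_of_dependent_inverses (K : fieldType) (E : ((V -> K) -> K) -> Prop)
    (k : nat) (a c : 'I_k -> K) (g : 'I_k -> (V -> K) -> K) :
  injective a -> (forall i, polyfun_on P (g i)) ->
  (forall i, in_ideal P E (fun v => 1 - g i v * (v u - a i))) ->
  (exists i, c i != 0) -> (forall v, \sum_i c i * g i v = 0) ->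
  exists2 q : {poly K}, q != 0 & in_ideal P E (fun v => q.[v u]).
Proof.
move=> a_inj Pg Ig [i0 ci0] c_rel.
exists (\sum_i c i *: \prod_(j | j != i) ('X - (a j)%:P)).
  exact: lagrange_combination_neq0 ci0.
pose T i v := \prod_(j | j != i) (v u - a j).
have IT i : in_ideal P E (fun v => T i v - g i v * \prod_j (v u - a j)).
  apply: (@in_ideal_ext _ _ _ _ (fun v => T i v * (1 - g i v * (v u - a i)))).
    by move=> v; rewrite [in RHS](bigD1 i) //= mulrBr mulr1 mulrCA [_ * (v u - a i)]mulrC.
  by apply: in_idealMl (Ig i); apply: polyfun_on_prod => j; apply: polyfun_on_coordB.
apply: (@in_ideal_ext _ _ _ _
  (fun v => \sum_i c i * (T i v - g i v * \prod_j (v u - a j)))).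
  move=> v; rewrite horner_sum.
  transitivity (\sum_i c i * T i v - (\sum_i c i * g i v) * \prod_j (v u - a j)).
    by rewrite mulr_suml -sumrB; apply: eq_bigr => i _; rewrite mulrBr mulrA.
  rewrite c_rel mul0r subr0; apply: eq_bigr => i _.
  by rewrite hornerZ horner_prod; congr (_ * _); apply: eq_bigr => j _; rewrite hornerXsubC.
by apply: in_ideal_sum => i; apply: in_idealMl (IT i); apply: polyfun_on_cst.
Qed.

Lemma one_in_ideal_of_poly (K : closedFieldType) (E : ((V -> K) -> K) -> Prop) (q : {poly K}) :
  q != 0 -> in_ideal P E (fun v => q.[v u]) ->
  (forall r, invertible_mod P E (fun v => v u - r)) -> in_ideal P E (fun _ => 1).
Proof.
move=> q_neq0 Iq inv; have [rs q_split] := closed_field_poly_normal q.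
have lc_neq0 : lead_coef q != 0 by rewrite lead_coef_eq0.
apply: (@in_ideal_one_of_invertible _ _ _ _ (fun v => \prod_(r <- rs) (v u - r))).
  apply: invertible_mod_prod => // r; exact: polyfun_on_coordB.
apply: (@in_ideal_ext _ _ _ _ (fun v => (lead_coef q)^-1 * q.[v u])).
  move=> v; rewrite {2}q_split hornerZ horner_prod mulKf //.
  by apply: eq_bigr => r _; rewrite hornerXsubC.
by apply: in_idealMl => //; apply: polyfun_on_cst.
Qed.

End OneCoordinate.

Section CountableNullstellensatz.

Variables (K : closedFieldType) (V : Type) (enum : nat -> option V).
Hypothesis unc_K : uncountable K.
Local Notation fn := ((V -> K) -> K).
Local Notation P := (enumerated enum).
Implicit Types (E : fn -> Prop) (f : fn).

Lemma proper_adjoin_coord E u :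
  P u -> proper_ideal P E -> exists a : K, proper_ideal P (adjoin E (fun v => v u - a)).
Proof.
move=> Pu proper_E; apply: NNPP => no_a.
have inverse a : exists eN : pexpr K V * nat,
    pexpr_vars_in (enumerated_below enum eN.2) eN.1 /\
    in_ideal P E (fun v => 1 - peval eN.1 v * (v u - a)).
  have /in_ideal_adjoin [g [e [Pe ge]] Ig] :
      in_ideal P (adjoin E (fun v => v u - a)) (fun _ => 1).
    by apply: NNPP => proper_a; apply: no_a; exists a.
  have [N Pe_N] := pexpr_vars_bounded (var_index enum) Pe.
  by exists (e, N); split=> //; apply: in_ideal_ext Ig => v; rewrite ge.
have [eN eNP] := choice _ inverse.
have eN_vars b := proj1 (eNP b); have eN_inv b := proj2 (eNP b).
have [n large] :=
  uncountable_large_fiber 0 (fun a => maxn (eN a).2 (pexpr_deg (eN a).1)) unc_K.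
set L := @monomials K V enum n n.
have [s [uniq_s size_s s_n]] := large (size L).+1.
pose a (i : 'I_(size L).+1) := nth 0 s i.
have a_inj : injective a.
  move=> i j /eqP; rewrite nth_uniq ?size_s // => /eqP; exact: val_inj.
pose g i := peval (eN (a i)).1.
have g_span i : in_span L (g i).
  have /s_n code_ai : a i \in s by rewrite mem_nth ?size_s.
  rewrite /L -code_ai.
  apply: in_span_monomials_peval; last exact: leq_maxr.
  apply: pexpr_vars_in_mono (eN_vars (a i)) => w [Pw lt_w].
  by split=> //; apply: leq_trans lt_w (leq_maxl _ _).
have Pg b : polyfun_on P (peval (eN b).1).
  exists (eN b).1; split=> //; apply: pexpr_vars_in_mono (eN_vars b); by move=> w [].
have [c [c_neq0 c_rel]] := in_span_dependent g_span.
have [q q_neq0 Iq] := poly_in_ideal_of_dependent_inverses Pu a_inj (fun i => Pg (a i))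
  (fun i => eN_inv (a i)) c_neq0 c_rel.
apply: proper_E; apply: (one_in_ideal_of_poly Pu q_neq0 Iq) => b.
by exists (peval (eN b).1); [apply: Pg | apply: eN_inv].
Qed.

Section CoordinateChain.

Variable pick : (fn -> Prop) -> V -> K.
Hypothesis pick_proper : forall E u,
  P u -> proper_ideal P E -> proper_ideal P (adjoin E (fun v => v u - pick E u)).

Fixpoint coord_chain E k : fn -> Prop :=
  if k is k'.+1 then
    if enum k' is Some u then adjoin (coord_chain E k') (fun v => v u - pick (coord_chain E k') u)
    else coord_chain E k'
  else E.

Lemma coord_chain_mono E k k' f : (k <= k')%N -> coord_chain E k f -> coord_chain E k' f.
Proof.
move=> /subnK <-; elim: (k' - k)%N => [//|j IH] Ek_f.
by rewrite addSn /=; case: (enum (j + k)%N) => [u|]; [left|]; apply: IH.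
Qed.

Lemma coord_chain_proper E k : proper_ideal P E -> proper_ideal P (coord_chain E k).
Proof.
move=> proper_E; elim: k => [//|k IH] /=.
case enum_k: (enum k) => [u|//]; apply: pick_proper IH; exists k; exact: enum_k.
Qed.

Definition chain_point E (w : V) : K := pick (coord_chain E (var_index enum w)) w.

Lemma coord_chain_point E w :
  P w -> coord_chain E (var_index enum w).+1 (fun v => v w - chain_point E w).
Proof. by move=> Pw /=; rewrite var_indexP //; right. Qed.

Lemma peval_sub_chain_point E N (e : pexpr K V) :
  pexpr_vars_in (enumerated_below enum N) e ->
  in_ideal P (coord_chain E N) (fun v => peval e v - peval e (chain_point E)).
Proof.
have vars_P b : pexpr_vars_in (enumerated_below enum N) b -> polyfun_on P (peval b).
  by move=> Pb; exists b; split=> //; apply: pexpr_vars_in_mono Pb => w [].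
elim: e => [c|w|a IHa b IHb|a IHa b IHb] /=.
- by move=> _; apply: in_ideal_ext (in_ideal0 _ _) => v; rewrite subrr.
- move=> [Pw lt_wN]; apply: in_ideal_gen.
  by apply: (coord_chain_mono lt_wN); apply: coord_chain_point.
- move=> [Pa Pb]; apply: (@in_ideal_ext _ _ _ _
    (fun v => (peval a v - peval a (chain_point E)) + (peval b v - peval b (chain_point E)))).
    by move=> v; rewrite opprD addrACA.
  exact: in_idealD (IHa Pa) (IHb Pb).
- move=> [Pa Pb]; apply: (@in_ideal_ext _ _ _ _ (fun v =>
    peval b v * (peval a v - peval a (chain_point E)) +
    peval a (chain_point E) * (peval b v - peval b (chain_point E)))).
    by move=> v; ring.
  apply: in_idealD; apply: in_idealMl; [exact: vars_P | exact: IHa | |exact: IHb].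
  exact: polyfun_on_cst.
Qed.

(* Any [f] in [E] differs from the constant [f (chain_point E)] by an element of some
   [coord_chain E N], which is proper. *)
Lemma chain_point_zero E :
  proper_ideal P E -> (forall f, E f -> polyfun_on P f) ->
  forall f, E f -> f (chain_point E) = 0.
Proof.
move=> proper_E PE f Ef; have [e [Pe fe]] := PE f Ef.
have [N Pe_N] := pexpr_vars_bounded (var_index enum) Pe.
have I_f : in_ideal P (coord_chain E N) (fun _ => f (chain_point E)).
  apply: (@in_ideal_ext _ _ _ _
    (fun v => f v - (peval e v - peval e (chain_point E)))).
    by move=> v; rewrite !fe opprB addrC subrK.
  apply: in_idealB; last exact: peval_sub_chain_point Pe_N.
  by apply: in_ideal_gen; apply: (@coord_chain_mono _ 0).
case: (eqVneq (f (chain_point E)) 0) => // f_neq0.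
case: (coord_chain_proper (k := N) proper_E).
apply: (@in_ideal_ext _ _ _ _ (fun v => (f (chain_point E))^-1 * f (chain_point E))).
  by move=> v; rewrite mulVf.
by apply: in_idealMl I_f; apply: polyfun_on_cst.
Qed.

End CoordinateChain.

Theorem countable_nullstellensatz E :
  (forall f, E f -> polyfun_on P f) -> finitely_solvable E -> exists v, forall f, E f -> f v = 0.
Proof.
move=> PE solvable.
have pick_ex E' u : exists a : K,
    P u -> proper_ideal P E' -> proper_ideal P (adjoin E' (fun v => v u - a)).
  case: (classic (P u /\ proper_ideal P E')) => [[Pu proper_E']|not_both].
    by have [a proper_a] := proper_adjoin_coord Pu proper_E'; exists a.
  by exists 0 => Pu proper_E'; case: not_both.
have [pick pickP] := choice _ (fun E' => choice _ (pick_ex E')).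
exists (chain_point pick E); apply: (chain_point_zero pickP) => //.
exact: proper_of_finitely_solvable.
Qed.

End CountableNullstellensatz.

Lemma gmulVr (G : group) (a : G) : gmul a (ginv a) = gone G.
Proof.
rewrite -[gmul a _]gmul1 -(gmulV (ginv a)) -gmulA [gmul (ginv a) (gmul a _)]gmulA.
by rewrite gmulV gmul1.
Qed.

Lemma gmul1r (G : group) (a : G) : gmul a (gone G) = a.
Proof. by rewrite -(gmulV a) gmulA gmulVr gmul1. Qed.

Section Cosets.

Variables (G : group) (n : nat) (s : 'I_n -> G).

Fixpoint word_eval (w : seq ('I_n * bool)) : G :=
  if w is (p, b) :: w' then gmul (if b then s p else ginv (s p)) (word_eval w') else gone G.

Lemma word_eval_cat w w' : word_eval (w ++ w') = gmul (word_eval w) (word_eval w').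
Proof. by elim: w => [|[p b] w IH] /=; rewrite ?gmul1 // IH gmulA. Qed.

Definition word_inv (w : seq ('I_n * bool)) := rev [seq (pb.1, ~~ pb.2) | pb <- w].

Lemma word_eval_inv w : gmul (word_eval w) (word_eval (word_inv w)) = gone G.
Proof.
elim: w => [|[p b] w IH] /=; first exact: gmul1.
rewrite /word_inv /= rev_cons -cats1 word_eval_cat -/(word_inv w) /= gmul1r.
rewrite -gmulA [gmul (word_eval w) _]gmulA IH gmul1.
by case: b; [apply: gmulVr | apply: gmulV].
Qed.

Definition coset_rel (a b : G) := exists w, b = gmul a (word_eval w).

Lemma coset_rel_refl a : coset_rel a a.
Proof. by exists [::]; rewrite gmul1r. Qed.

Lemma coset_rel_trans a b c : coset_rel a b -> coset_rel b c -> coset_rel a c.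
Proof. by move=> [w1 ->] [w2 ->]; exists (w1 ++ w2); rewrite word_eval_cat gmulA. Qed.

Lemma coset_rel_sym a b : coset_rel a b -> coset_rel b a.
Proof. by move=> [w ->]; exists (word_inv w); rewrite -gmulA word_eval_inv gmul1r. Qed.

Lemma coset_rel_mulr a p : coset_rel a (gmul a (s p)).
Proof. by exists [:: (p, true)]; rewrite /= gmul1r. Qed.

Definition coset_rep (h : G) : G := epsilon (inhabits (gone G)) (fun r => coset_rel r h).

Lemma coset_rel_rep h : coset_rel (coset_rep h) h.
Proof.
apply: (@epsilon_spec _ (inhabits (gone G)) (fun r => coset_rel r h)).
by exists h; apply: coset_rel_refl.
Qed.

Lemma coset_rep_eq h h' : coset_rel h h' -> coset_rep h = coset_rep h'.
Proof.
move=> hh'; rewrite /coset_rep; congr (epsilon _ _).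
apply: functional_extensionality => r; apply: propositional_extensionality.
split=> r_h; first exact: coset_rel_trans r_h hh'.
exact: coset_rel_trans r_h (coset_rel_sym hh').
Qed.

End Cosets.

Lemma List_In_choice (T U : Type) (R : U -> T -> Prop) (l : seq T) :
  (forall t, List.In t l -> exists u, R u t) ->
  exists F : seq U, forall t, List.In t l -> exists2 u, List.In u F & R u t.
Proof.
elim: l => [|t l IH] Rl; first by exists [::].
have [F RF] := IH (fun t' l_t' => Rl t' (or_intror l_t')).
have [u Rut] := Rl t (or_introl erefl).
exists (u :: F) => t' [<- | /RF [u' F_u' Ru't']]; first by exists u; [left|].
by exists u'; [right|].
Qed.

Section ClosedImage.

Variables (G : group) (K : closedFieldType) (m : nat).
Variables (A : ('I_m -> K) -> Prop) (S : pexpr K 'I_m -> Prop).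
Hypothesis A_zeros : forall v, A v <-> (forall e, S e -> peval e v = 0).
Variables (n : nat) (s : 'I_n -> G) (mu : ('I_n * 'I_m -> K) -> ('I_m -> K)).
Hypothesis mu_poly : poly_map mu.
Variable tau : (G -> 'I_m -> K) -> (G -> 'I_m -> K).
Hypothesis tau_local :
  forall x, config A x -> forall g, tau x g = mu (fun p => x (gmul g (s p.1)) p.2).
Variable y : G -> 'I_m -> K.

Local Notation V := (G * 'I_m)%type.
Local Notation fn := ((V -> K) -> K).

Definition coset_enum (r : G) (k : nat) : option V :=
  if (unpickle k : option (seq ('I_n * bool) * 'I_m)) is Some (w, i)
  then Some (gmul r (word_eval s w), i) else None.

Lemma coset_enumerated r h i : coset_rel s r h -> enumerated (coset_enum r) (h, i).
Proof. by move=> [w ->]; exists (pickle (w, i)); rewrite /coset_enum pickleK. Qed.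

(* Equations in the unknowns [v (h', i)] standing for [x h' i]: [x h] lies in [A], and
   [tau x] agrees with [y] at [h]. *)
Definition cell_constraint (h : G) (f : fn) : Prop :=
  (exists2 e, S e & f = fun v => peval e (fun i => v (h, i))) \/
  (exists i, f = fun v => mu (fun p => v (gmul h (s p.1), p.2)) i - y h i).

Definition coset_constraint (r : G) (f : fn) := exists2 h, coset_rel s r h & cell_constraint h f.

Lemma coset_constraint_polyfun r f :
  coset_constraint r f -> polyfun_on (enumerated (coset_enum r)) f.
Proof.
move=> [h rh [[e _ ->] | [i ->]]].
  by apply: polyfun_on_peval => i; apply: coset_enumerated.
have [e mu_e] := mu_poly i.
apply: polyfun_onB; last exact: polyfun_on_cst.
apply: polyfun_on_ext (polyfun_on_peval e _) => [v|p]; first by rewrite mu_e.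
exact/coset_enumerated/(coset_rel_trans rh)/coset_rel_mulr.
Qed.

Lemma cell_constraint_preimage x h f :
  config A x -> tau x h = y h -> cell_constraint h f -> f (fun p => x p.1 p.2) = 0.
Proof.
move=> xA tau_xh [[e Se ->] | [i ->]]; first exact: (proj1 (A_zeros _) (xA h)).
by rewrite -tau_xh tau_local // subrr.
Qed.

Hypothesis y_closure : forall F : list G,
  exists z, image_of A tau z /\ forall h, List.In h F -> z h = y h.

Lemma coset_constraint_finitely_solvable r : finitely_solvable (coset_constraint r).
Proof.
move=> l l_r; have [F F_l] : exists F : seq G,
    forall f, List.In f l -> exists2 h, List.In h F & cell_constraint h f.
  by apply: List_In_choice => f /l_r [h _ cell]; exists h.
have [_ [[x [xA <-]] tau_xF]] := y_closure F.
exists (fun p => x p.1 p.2) => f /F_l [h F_h cell].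
exact: cell_constraint_preimage xA (tau_xF h F_h) cell.
Qed.

Hypothesis unc_K : uncountable K.

Lemma coset_constraint_solvable r : exists v, forall f, coset_constraint r f -> f v = 0.
Proof.
apply: (countable_nullstellensatz unc_K) => [f|].
  exact: coset_constraint_polyfun.
exact: coset_constraint_finitely_solvable.
Qed.

Definition glue (sol : G -> V -> K) (h : G) (i : 'I_m) : K := sol (coset_rep s h) (h, i).

Variable sol : G -> V -> K.
Hypothesis solP : forall r f, coset_constraint r f -> f (sol r) = 0.

Lemma glue_config : config A (glue sol).
Proof.
move=> h; apply/A_zeros => e Se.
apply: (solP (f := fun v => peval e (fun i => v (h, i)))).
by exists h; [apply: coset_rel_rep | left; exists e].
Qed.

Lemma tau_glue : tau (glue sol) = y.
Proof.
apply: functional_extensionality => h; apply: functional_extensionality => i.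
rewrite tau_local; last exact: glue_config.
have -> : (fun p => glue sol (gmul h (s p.1)) p.2) =
           (fun p => sol (coset_rep s h) (gmul h (s p.1), p.2)).
  apply: functional_extensionality => p.
  by rewrite /glue (coset_rep_eq (coset_rel_sym (coset_rel_mulr s h p.1))).
apply/eqP; rewrite -subr_eq0; apply/eqP.
apply: (solP (f := fun v => mu (fun p => v (gmul h (s p.1), p.2)) i - y h i)).
by exists h; [apply: coset_rel_rep | right; exists i].
Qed.

End ClosedImage.

Theorem theorem1p1 (G : group) (K : closedFieldType) (m : nat)
  (A : ('I_m -> K) -> Prop)
  (hK : uncountable K) (hA : affine_algebraic_set A)
  (tau : (G -> 'I_m -> K) -> (G -> 'I_m -> K))
  (htau : algebraic_CA A tau) :
  prodiscrete_closed A (image_of A tau).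
Proof.
have [S A_zeros] := hA; have [_ [n [s [mu [mu_poly tau_local]]]]] := htau.
move=> y _ y_closure.
have [sol solP] := choice _ (coset_constraint_solvable A_zeros mu_poly tau_local y_closure hK).
exists (glue s sol); split; first exact: glue_config solP.
exact: (tau_glue (tau := tau) A_zeros tau_local solP).
Qed.
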